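(* Let $\mathcal T$ be an $m\times n$ PEPS with contraction $\mathbf T\neq0$ and let $(\Delta,\delta)$ be an $(\epsilon_1,\epsilon_2)$-perturbation of $\mathcal T$. Then, up to $O(\epsilon_1^2+\epsilon_2^2)$, $$\mathscr E_r(\mathcal T,\Delta,\delta)\le\epsilon_1\sum_{i=1}^{n-1}\frac{\|T^{(\cdot,[1,i-1])}_\rightarrow\|_2\,\|\mathbf T^{(\cdot,i)}\|_F\,\|T^{(\cdot,[i+1,n])}_\leftarrow\|_2}{\|\mathbf T\|_F}+\mathscr E_r(\mathcal T^{(\cdot,n)},\delta)\,\frac{\|T^{(\cdot,[1,n-1])}_\rightarrow\|_2\,\|\mathbf T^{(\cdot,n)}\|_F}{\|\mathbf T\|_F}.$$
   Context: PEPS: an $m\times n$ PEPS is a tensor network on the $m\times n$ grid with node tensors $\mathbf T^{(i,j)}$ ($i$ = row, $j$ = column, $(1,1)$ upper left); each node has a physical (uncontracted) leg, horizontal bonds join $(i,j)$ and $(i,j+1)$, vertical bonds join $(i,j)$ and $(i+1,j)$; the contraction $\mathbf T$ sums over all bond indices the product of node entries. The column tensor $\mathbf T^{(\cdot,j)}$ is the contraction of the nodes of column $j$ (open legs: its physical legs and horizontal bonds to columns $j\pm1$); $\mathbf T^{(\cdot,[p,q])}$ is the contraction of columns $p,\dots,q$. $T^{(\cdot,[1,j-1])}_\rightarrow$ is the matricization of $\mathbf T^{(\cdot,[1,j-1])}$ with rows indexed by the physical legs of columns $1,\dots,j-1$ and columns indexed by the horizontal bonds between columns $j-1$ and $j$;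 $T^{(\cdot,[j+1,n])}_\leftarrow$ is the matricization of $\mathbf T^{(\cdot,[j+1,n])}$ with rows indexed by the physical legs of columns $j+1,\dots,n$ and columns indexed by the horizontal bonds between columns $j$ and $j+1$; empty blocks have spectral norm $1$ by convention. Perturbation model: $(\Delta,\delta)$ consists of tensors $\Delta^{(j)}$ ($1\le j\le n-1$) of the shape of $\mathbf T^{(\cdot,j)}$ and $\delta^{(i)}$ ($1\le i\le m$) of the shape of $\mathbf T^{(i,n)}$; the perturbed PEPS has column tensors $\mathbf T^{(\cdot,j)}+\Delta^{(j)}$ for $j\le n-1$ and nodes $\mathbf T^{(i,n)}+\delta^{(i)}$ in column $n$; $\hat{\mathbf T}$ is its contraction and $\mathscr E_r(\mathcal T,\Delta,\delta)=\|\hat{\mathbf T}-\mathbf T\|_F/\|\mathbf T\|_F$. It is an $(\epsilon_1,\epsilon_2)$-perturbation if $\|\Delta^{(j)}\|_F\le\epsilon_1\|\mathbf T^{(\cdot,j)}\|_F$ and $\|\delta^{(i)}\|_F\le\epsilon_2\|\mathbf T^{(i,n)}\|_F$ for all $j\le n-1$, $i\le m$. $\mathscr E_r(\mathcal T^{(\cdot,n)},\delta)=\|\hat{\mathbf T}^{(\cdot,n)}-\mathbf T^{(\cdot,n)}\|_F/\|\mathbf T^{(\cdot,n)}\|_F$, where $\hat{\mathbf T}^{(\cdot,n)}$ is the contraction of the perturbed nodes of column $n$. $\|\cdot\|_F$ Frobenius, $\|\cdot\|_2$ spectral norm. *)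

From Stdlib Require Import Reals ClassicalEpsilon.
From HB Require Import structures.
From mathcomp Require Import all_boot.
Set Implicit Arguments. Unset Strict Implicit. Unset Printing Implicit Defensive.

Open Scope R_scope.

Lemma Rplus_assoc' : associative Rplus.
Proof. by move=> x y z; rewrite Rplus_assoc. Qed.
Lemma Rmult_assoc' : associative Rmult.
Proof. by move=> x y z; rewrite Rmult_assoc. Qed.
HB.instance Definition _ := Monoid.isComLaw.Build R 0 Rplus Rplus_assoc' Rplus_comm Rplus_0_l.
HB.instance Definition _ := Monoid.isComLaw.Build R 1 Rmult Rmult_assoc' Rmult_comm Rmult_1_l.

Notation "\rsum_ ( x : X ) F" := (\big[Rplus/0]_(x : X) F)
  (at level 41, F at level 41, x, X at level 50).
Notation "\rprod_ ( x : X ) F" := (\big[Rmult/1]_(x : X) F)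
  (at level 36, F at level 36, x, X at level 50).

Definition fnorm1 (X : finType) (f : X -> R) : R :=
  sqrt (\rsum_(x : X) (f x)^2).
Definition fnorm3 (X Y Z : finType) (f : X -> Y -> Z -> R) : R :=
  sqrt (\rsum_(x : X) \rsum_(y : Y) \rsum_(z : Z) (f x y z)^2).
Definition fnorm5 (X1 X2 X3 X4 X5 : finType) (f : X1 -> X2 -> X3 -> X4 -> X5 -> R) : R :=
  sqrt (\rsum_(x1 : X1) \rsum_(x2 : X2) \rsum_(x3 : X3) \rsum_(x4 : X4) \rsum_(x5 : X5)
        (f x1 x2 x3 x4 x5)^2).

Definition specnorm (X Y : finType) (M : X -> Y -> R) : R :=
  epsilon (inhabits 0)
    (is_lub (fun r => exists v : Y -> R,
                \rsum_(y : Y) (v y)^2 <= 1 /\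
                r = sqrt (\rsum_(x : X) (\rsum_(y : Y) M x y * v y)^2))).

(* Rows and columns are 0-indexed: row i (0 <= i < m) and column j (0 <= j < n)
   of the paper's node (i+1, j+1).  Horizontal bond k of row i sits between
   columns k-1 and k; bonds 0 and >= n are the (trivial, dimension-1) open
   boundary.  Vertical bond l of column j sits between rows l-1 and l; bonds 0
   and >= m are trivial. *)

Definition bdim (N : nat) (d : nat -> nat -> nat) (a k : nat) : nat :=
  if (k == 0)%N || (N <= k)%N then 1%N else d a k.

Record peps (m n : nat) := PEPS {
  pdim : nat -> nat -> nat;
  hdim : nat -> nat -> nat;          (* hdim i k : horizontal bond k of row i *)
  vdim : nat -> nat -> nat;          (* vdim j l : vertical bond l of column j *)
  node : forall i j : nat,
      'I_(pdim i j) ->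
      'I_(bdim n hdim i j) -> 'I_(bdim n hdim i j.+1) ->   (* left, right bonds *)
      'I_(bdim m vdim j i) -> 'I_(bdim m vdim j i.+1) ->   (* up, down bonds *)
      R
}.
Arguments node {m n} p i j.

Unset Implicit Arguments.
Section PEPSdefs.
Variables (m n : nat) (T : peps m n).

Definition nodeT (i j : nat) : Type :=
  'I_(pdim T i j) -> 'I_(bdim n (hdim T) i j) -> 'I_(bdim n (hdim T) i j.+1) ->
  'I_(bdim m (vdim T) j i) -> 'I_(bdim m (vdim T) j i.+1) -> R.

Definition addNode (i j : nat) (A B : nodeT i j) : nodeT i j :=
  fun a b c d e => A a b c d e + B a b c d e.

(* physical legs of column j, horizontal bonds k (one per row), vertical
   bonds of column j *)
Definition CP (j : nat) : finType := {dffun forall i : 'I_m, 'I_(pdim T i j)}.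
Definition CB (k : nat) : finType := {dffun forall i : 'I_m, 'I_(bdim n (hdim T) i k)}.
Definition VB (j : nat) : finType := {dffun forall l : 'I_m.+1, 'I_(bdim m (vdim T) j l)}.

Definition colT (j : nat) : Type := CP j -> CB j -> CB j.+1 -> R.

Definition addCol (j : nat) (A B : colT j) : colT j := fun s a b => A s a b + B s a b.

Definition colOf (j : nat) (N : forall i : nat, nodeT i j) : colT j :=
  fun s a b => \rsum_(c : VB j) \rprod_(i : 'I_m)
     N i (s i) (a i) (b i) (c (widen_ord (leqnSn m) i)) (c (lift ord0 i)).

Definition column (j : nat) : colT j := colOf j (fun i => node T i j).

(* physical index type of columns k, ..., k+d-1 *)
Fixpoint rowRng (k d : nat) : finType :=
  match d with
  | 0 => unit
  | d'.+1 => (rowRng k d' * CP (d' + k))%type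
  end.

Fixpoint rng (C : forall j, colT j) (k d : nat) : rowRng k d -> CB k -> CB (d + k) -> R :=
  match d return rowRng k d -> CB k -> CB (d + k) -> R with
  | 0 => fun _ a b => if a == b then 1 else 0
  | d'.+1 => fun r a b =>
      \rsum_(c : CB (d' + k)) rng C k d' r.1 a c * C (d' + k)%N r.2 c b
  end.

Definition contract (C : forall j, colT j) : rowRng 0 n -> R :=
  fun S => \rsum_(a : CB 0) \rsum_(b : CB (n + 0)) rng C 0 n S a b.

(* matricization T^(.,[1,j])_-> : the block of columns 0..j-1, rows = their
   physical legs, columns = horizontal bonds j (between columns j-1 and j) *)
Definition leftMat (C : forall j, colT j) (j : nat) : rowRng 0 j -> CB (j + 0) -> R :=
  fun r b => \rsum_(a : CB 0) rng C 0 j r a b.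

(* matricization T^(.,[j+1,n])_<- : block of columns j+1..n-1, rows = their
   physical legs, columns = horizontal bonds j+1 (between columns j and j+1) *)
Definition rightMat (C : forall j, colT j) (j : nat) :
    rowRng j.+1 (n - j.+1) -> CB j.+1 -> R :=
  fun r a => \rsum_(b : CB (n - j.+1 + j.+1)) rng C j.+1 (n - j.+1) r a b.

(* Delta j : perturbation of column tensor j (used for j < n-1, i.e. the
   paper's columns 1..n-1); delta i : perturbation of node (i, n-1), i.e. the
   paper's node (i+1, n) in the last column. *)

Definition pertNode (delta : forall i, nodeT i n.-1) (i j : nat) : nodeT i j :=
  match Nat.eq_dec n.-1 j with
  | left e => addNode i j (node T i j) (eq_rect _ (fun k => nodeT i k) (delta i) j e)
  | right _ => node T i j
  end.

Definition pertChain (Delta : forall j, colT j) (delta : forall i, nodeT i n.-1) :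
    forall j, colT j :=
  fun j => if (j < n.-1)%N then addCol j (column j) (Delta j)
           else colOf j (fun i => pertNode delta i j).

Definition isPert (eps1 eps2 : R) (Delta : forall j, colT j)
    (delta : forall i, nodeT i n.-1) : Prop :=
  (forall j : nat, (j < n.-1)%N -> fnorm3 (Delta j) <= eps1 * fnorm3 (column j)) /\
  (forall i : nat, (i < m)%N -> fnorm5 (delta i) <= eps2 * fnorm5 (node T i n.-1)).

Definition normT : R := fnorm1 (contract column).

Definition relErr (Delta : forall j, colT j) (delta : forall i, nodeT i n.-1) : R :=
  fnorm1 (fun S => contract (pertChain Delta delta) S - contract column S) / normT.

Definition relErrCol (delta : forall i, nodeT i n.-1) : R :=
  fnorm3 (fun s a b => colOf n.-1 (fun i => addNode i n.-1 (node T i n.-1) (delta i)) s a b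
                       - column n.-1 s a b)
  / fnorm3 (column n.-1).

End PEPSdefs.

From Stdlib Require Import Reals ClassicalEpsilon Lra Lia.
From HB Require Import structures.
From mathcomp Require Import all_boot zify.

(* Write the perturbed column tensors as [B j = A j + D j], with [A j] the columns
   of the network.  Contraction is multilinear in the columns, so the perturbed
   contraction minus the exact one is the sum over [p] of the networks in which
   column [p] alone is replaced by [D p], plus a remainder each of whose terms
   contains at least two factors [D j].  Every [D j] is entrywise O(eps1 + eps2)
   (in the last column because it is a difference of products of perturbed
   nodes), so the remainder is O(eps1^2 + eps2^2).  Matricising the [p]-th linear
   term as left block x [D p] x right block bounds its Frobenius norm by
   ||T_->^[1,p-1]||_2 ||D p||_F ||T_<-^[p+1,n]||_2, where ||D p||_F <= eps1 ||T^(.,p)||_F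
   for [p < n-1], while ||D (n-1)||_F = E_r(T^(.,n), delta) ||T^(.,n)||_F and the empty
   right block has norm 1.  Minkowski's inequality adds up the pieces. *)

Set Implicit Arguments. Unset Strict Implicit. Unset Printing Implicit Defensive.
Open Scope R_scope.

Section RealSums.
Variables (I : Type) (r : seq I) (P : pred I).

Lemma sumRD (F G : I -> R) :
  \big[Rplus/0]_(i <- r | P i) (F i + G i) =
  \big[Rplus/0]_(i <- r | P i) F i + \big[Rplus/0]_(i <- r | P i) G i.
Proof. exact: big_split. Qed.

Lemma sumRMl (c : R) (F : I -> R) :
  c * \big[Rplus/0]_(i <- r | P i) F i = \big[Rplus/0]_(i <- r | P i) (c * F i).
Proof.
elim/big_rec2: _ => [|i y1 y2 _ <-]; first by rewrite Rmult_0_r.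
by rewrite Rmult_plus_distr_l.
Qed.

Lemma sumRMr (c : R) (F : I -> R) :
  \big[Rplus/0]_(i <- r | P i) F i * c = \big[Rplus/0]_(i <- r | P i) (F i * c).
Proof. by rewrite Rmult_comm sumRMl; apply: eq_bigr => i _; rewrite Rmult_comm. Qed.

Lemma sumRB (F G : I -> R) :
  \big[Rplus/0]_(i <- r | P i) F i - \big[Rplus/0]_(i <- r | P i) G i =
  \big[Rplus/0]_(i <- r | P i) (F i - G i).
Proof.
elim/big_rec3: _ => [|i y1 y2 y3 _ <-]; first by rewrite Rminus_diag.
by ring.
Qed.

Lemma leR_sum (F G : I -> R) : (forall i, P i -> F i <= G i) ->
  \big[Rplus/0]_(i <- r | P i) F i <= \big[Rplus/0]_(i <- r | P i) G i.
Proof. by move=> h; elim/big_ind2: _ => // *; lra. Qed.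

Lemma sumR_ge0 (F : I -> R) : (forall i, P i -> 0 <= F i) ->
  0 <= \big[Rplus/0]_(i <- r | P i) F i.
Proof. by move=> h; elim/big_ind: _ => // *; lra. Qed.

Lemma Rabs_sum_le (F : I -> R) :
  Rabs (\big[Rplus/0]_(i <- r | P i) F i) <= \big[Rplus/0]_(i <- r | P i) Rabs (F i).
Proof.
elim/big_ind2: _ => [|x1 x2 y1 y2 h1 h2|i _]; last by lra.
  by rewrite Rabs_R0; lra.
by apply: Rle_trans (Rabs_triang _ _) _; lra.
Qed.

Lemma Rabs_prod_le (x X : I -> R) : (forall i, Rabs (x i) <= X i) ->
  Rabs (\big[Rmult/1]_(i <- r) x i) <= \big[Rmult/1]_(i <- r) X i.
Proof.
move=> h; elim: r => [|a s IH]; rewrite ?big_nil ?big_cons; first by rewrite Rabs_R1; lra.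
by rewrite Rabs_mult; apply: Rmult_le_compat => //; apply: Rabs_pos.
Qed.

Lemma prodR_ge0 (X : I -> R) : (forall i, 0 <= X i) -> 0 <= \big[Rmult/1]_(i <- r) X i.
Proof.
move=> h; elim: r => [|a s IH]; rewrite ?big_nil ?big_cons; first lra.
exact: Rmult_le_pos.
Qed.

End RealSums.

Lemma sumR_const (X : finType) (c : R) : \rsum_(x : X) c = INR #|X| * c.
Proof.
rewrite big_const; elim: #|X| => [|k IH]; first by rewrite /=; lra.
by rewrite iterS IH S_INR; lra.
Qed.

Lemma sumR_ge_term (X : finType) (F : X -> R) (x0 : X) :
  (forall x, 0 <= F x) -> F x0 <= \rsum_(x : X) F x.
Proof.
move=> h; rewrite (bigD1 x0) //=.
have : 0 <= \big[Rplus/0]_(x | x != x0) F x by apply: sumR_ge0.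
lra.
Qed.

Lemma Rabs_sum_le_card (X : finType) (F : X -> R) (c : R) :
  (forall x, Rabs (F x) <= c) -> Rabs (\rsum_(x : X) F x) <= INR #|X| * c.
Proof.
move=> h; apply: Rle_trans (Rabs_sum_le _ _ _) _; rewrite -sumR_const.
exact: leR_sum.
Qed.

Lemma sumR_delta (X : finType) (F : X -> R) (b : X) :
  \rsum_(c : X) F c * (if c == b then 1 else 0) = F b.
Proof. by rewrite (bigD1 b) //= eqxx big1 => [|c /negbTE ->]; lra. Qed.

Lemma sumR_ord_last (N : nat) (g : nat -> R) : (0 < N)%N ->
  \rsum_(p : 'I_N) g p = \rsum_(p : 'I_N.-1) g p + g N.-1.
Proof. by case: N => // N _; rewrite big_ord_recr. Qed.

Lemma sumR_pair (X Y : finType) (F : X -> Y -> R) :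
  \rsum_(x : X) \rsum_(y : Y) F x y = \rsum_(p : (X * Y)%type) F p.1 p.2.
Proof. exact: pair_big. Qed.

Lemma sumR_unit (F : unit -> R) : \rsum_(u : unit) F u = F tt.
Proof. by rewrite (bigD1 tt) //= big_pred0 ?Rplus_0_r // => -[]. Qed.

Lemma Rabs_prodD_sub_le (I : Type) (r : seq I) (x y X : I -> R) (e : R) :
  0 <= e <= 1 -> (forall i, Rabs (x i) <= X i) -> (forall i, Rabs (y i) <= e * X i) ->
  Rabs (\big[Rmult/1]_(i <- r) (x i + y i) - \big[Rmult/1]_(i <- r) x i) <=
  e * INR (size r) * \big[Rmult/1]_(i <- r) (2 * X i).
Proof.
move=> he hx hy.
have hX i : 0 <= X i by apply: Rle_trans (hx i); apply: Rabs_pos.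
have hxy i : Rabs (x i + y i) <= 2 * X i.
  by apply: Rle_trans (Rabs_triang _ _) _; have := hx i; have := hy i; have := hX i; nra.
elim: r => [|a r IH]; rewrite ?big_nil ?big_cons.
  by rewrite Rminus_diag Rabs_R0 /=; lra.
have -> : INR (size (a :: r)) = INR (size r) + 1 by rewrite -S_INR.
move: IH; set P' := \big[Rmult/1]_(i <- r) (x i + y i); set P := \big[Rmult/1]_(i <- r) x i.
set Q := \big[Rmult/1]_(i <- r) (2 * X i) => IH.
have hP' : Rabs P' <= Q by apply: Rabs_prod_le.
have hQ : 0 <= Q by apply: prodR_ge0 => i; have := hX i; lra.
have -> : (x a + y a) * P' - x a * P = x a * (P' - P) + y a * P' by ring.
apply: Rle_trans (Rabs_triang _ _) _; rewrite !Rabs_mult.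
have h1 := Rmult_le_compat _ _ _ _ (Rabs_pos _) (Rabs_pos _) (hx a) IH.
have h2 := Rmult_le_compat _ _ _ _ (Rabs_pos _) (Rabs_pos _) (hy a) hP'.
have := hX a; have := pos_INR (size r) => hr ha.
have h3 : 0 <= X a * (e * INR (size r) * Q).
  by do 2 apply: Rmult_le_pos => //; apply: Rmult_le_pos => //; lra.
have h4 : 0 <= e * X a * Q by do 2 apply: Rmult_le_pos => //; lra.
apply: Rle_trans (Rplus_le_compat _ _ _ _ h1 h2) _.
have -> : e * (INR (size r) + 1) * (2 * X a * Q) =
  2 * (X a * (e * INR (size r) * Q)) + 2 * (e * X a * Q) by ring.
lra.
Qed.

Lemma Rabs_le_sqrt (a S : R) : a ^ 2 <= S -> Rabs a <= sqrt S.
Proof. by move=> h; rewrite -sqrt_Rsqr_abs; apply: sqrt_le_1_alt; rewrite Rsqr_pow2. Qed.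

Section SumOfSquares.
Variable X : finType.

Lemma sumsq_ge0 (f : X -> R) : 0 <= \rsum_(x : X) f x ^ 2.
Proof. by apply: sumR_ge0 => x _; apply: pow2_ge_0. Qed.

Lemma sumsq_ge_term (f : X -> R) x0 : f x0 ^ 2 <= \rsum_(x : X) f x ^ 2.
Proof. by apply: (sumR_ge_term (F := fun x => f x ^ 2) x0) => x; apply: pow2_ge_0. Qed.

Lemma sumsq_eq0 (f : X -> R) : \rsum_(x : X) f x ^ 2 = 0 -> forall x, f x = 0.
Proof.
move=> h x; have := sumsq_ge_term f x; rewrite h => hx.
by apply: Rsqr_0_uniq; rewrite Rsqr_pow2; have := pow2_ge_0 (f x); lra.
Qed.

Lemma sumsq_affine (f g : X -> R) (t : R) :
  \rsum_(x : X) (t * f x + g x) ^ 2 =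
  t ^ 2 * (\rsum_(x : X) f x ^ 2) + 2 * t * (\rsum_(x : X) f x * g x)
  + \rsum_(x : X) g x ^ 2.
Proof. by rewrite !sumRMl -!sumRD; apply: eq_bigr => x _; ring. Qed.

(* The discriminant of the nonnegative quadratic [t |-> sum (t f + g)^2]. *)
Lemma cauchy_schwarz (f g : X -> R) :
  (\rsum_(x : X) f x * g x) ^ 2 <= (\rsum_(x : X) f x ^ 2) * (\rsum_(x : X) g x ^ 2).
Proof.
set a := \rsum_(x : X) f x ^ 2; set b := \rsum_(x : X) f x * g x.
set c := \rsum_(x : X) g x ^ 2.
have ha : 0 <= a by apply: sumsq_ge0.
have hc : 0 <= c by apply: sumsq_ge0.
have [a0|apos] : a = 0 \/ 0 < a by lra.
  have fz := sumsq_eq0 a0.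
  have -> : b = 0 by rewrite /b big1 // => x _; rewrite fz; ring.
  by rewrite a0; lra.
have := sumsq_ge0 (fun x => (- b / a) * f x + g x).
rewrite sumsq_affine -/a -/b -/c => h.
have h2 : b ^ 2 / a <= c.
  have e : (- b / a) ^ 2 * a + 2 * (- b / a) * b + c = c - b ^ 2 / a by field; lra.
  by rewrite e in h; lra.
have := Rmult_le_compat_r a _ _ (Rlt_le _ _ apos) h2.
have -> : b ^ 2 / a * a = b ^ 2 by field; lra.
lra.
Qed.

Lemma fnorm1_add_le (f g : X -> R) :
  fnorm1 (fun x => f x + g x) <= fnorm1 f + fnorm1 g.
Proof.
rewrite /fnorm1.
have := cauchy_schwarz f g; have := sumsq_affine f g 1.
under eq_bigr => x _ do rewrite Rmult_1_l.
set a := \rsum_(x : X) f x ^ 2; set b := \rsum_(x : X) f x * g x.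
set c := \rsum_(x : X) g x ^ 2 => hs hcs.
have ha : 0 <= a by apply: sumsq_ge0.
have hc : 0 <= c by apply: sumsq_ge0.
have hb : b <= sqrt a * sqrt c.
  by rewrite -sqrt_mult //; apply: Rle_trans (Rle_abs b) _; apply: Rabs_le_sqrt.
have := sqrt_sqrt a ha; have := sqrt_sqrt c hc.
have := sqrt_pos a; have := sqrt_pos c => h1 h2 sc sa.
rewrite -(sqrt_pow2 (sqrt a + sqrt c)); last lra.
by apply: sqrt_le_1_alt; rewrite hs; nra.
Qed.

Lemma fnorm1_sum_le (J : Type) (r : seq J) (f : J -> X -> R) :
  fnorm1 (fun x => \big[Rplus/0]_(p <- r) f p x) <= \big[Rplus/0]_(p <- r) fnorm1 (f p).
Proof.
elim: r => [|a r IH].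
  rewrite big_nil /fnorm1; under eq_bigr => x _ do rewrite big_nil.
  by rewrite big1 ?sqrt_0 => [|x _] /=; [lra | ring].
rewrite big_cons {1}/fnorm1; under eq_bigr => x _ do rewrite big_cons.
by apply: Rle_trans (fnorm1_add_le (f a) (fun x => \big[Rplus/0]_(p <- r) f p x)) _; lra.
Qed.

Lemma fnorm1_le_card (f : X -> R) (c : R) :
  0 <= c -> (forall x, Rabs (f x) <= c) -> fnorm1 f <= sqrt (INR #|X|) * c.
Proof.
move=> hc h; rewrite /fnorm1.
rewrite -(sqrt_pow2 c hc) -sqrt_mult; [|exact: pos_INR|exact: pow2_ge_0].
apply: sqrt_le_1_alt; rewrite -sumR_const; apply: leR_sum => x _.
by rewrite -(pow2_abs (f x)); have := h x; have := Rabs_pos (f x); nra.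
Qed.

End SumOfSquares.

Lemma entry_le_fnorm3 (X Y Z : finType) (f : X -> Y -> Z -> R) x y z :
  Rabs (f x y z) <= fnorm3 f.
Proof.
apply: Rabs_le_sqrt.
apply: Rle_trans (sumR_ge_term (F := fun x => \rsum_(y : Y) \rsum_(z : Z) f x y z ^ 2) x _);
  last by move=> ?; apply: sumR_ge0 => ? _; apply: sumsq_ge0.
apply: Rle_trans (sumR_ge_term (F := fun y => \rsum_(z : Z) f x y z ^ 2) y _);
  last by move=> ?; apply: sumsq_ge0.
exact: sumsq_ge_term.
Qed.

Lemma entry_le_fnorm5 (X1 X2 X3 X4 X5 : finType) (f : X1 -> X2 -> X3 -> X4 -> X5 -> R)
    x1 x2 x3 x4 x5 :
  Rabs (f x1 x2 x3 x4 x5) <= fnorm5 f.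
Proof.
apply: Rabs_le_sqrt.
apply: Rle_trans (sumR_ge_term (F := fun x1 => \rsum_(x2 : X2) \rsum_(x3 : X3) \rsum_(x4 : X4)
  \rsum_(x5 : X5) f x1 x2 x3 x4 x5 ^ 2) x1 _);
  last by move=> ?; do 3 (apply: sumR_ge0 => ? _); apply: sumsq_ge0.
apply: Rle_trans (sumR_ge_term (F := fun x2 => \rsum_(x3 : X3) \rsum_(x4 : X4)
  \rsum_(x5 : X5) f x1 x2 x3 x4 x5 ^ 2) x2 _);
  last by move=> ?; do 2 (apply: sumR_ge0 => ? _); apply: sumsq_ge0.
apply: Rle_trans (sumR_ge_term (F := fun x3 => \rsum_(x4 : X4) \rsum_(x5 : X5)
  f x1 x2 x3 x4 x5 ^ 2) x3 _);
  last by move=> ?; apply: sumR_ge0 => ? _; apply: sumsq_ge0.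
apply: Rle_trans (sumR_ge_term (F := fun x4 => \rsum_(x5 : X5) f x1 x2 x3 x4 x5 ^ 2) x4 _);
  last by move=> ?; apply: sumsq_ge0.
exact: sumsq_ge_term.
Qed.

Lemma fnorm3_ge0 (X Y Z : finType) (f : X -> Y -> Z -> R) : 0 <= fnorm3 f.
Proof. exact: sqrt_pos. Qed.

Lemma fnorm3_eq0 (X Y Z : finType) (f : X -> Y -> Z -> R) :
  fnorm3 f <= 0 -> forall x y z, f x y z = 0.
Proof.
move=> h x y z; have := entry_le_fnorm3 f x y z; have := Rabs_pos (f x y z) => h1 h2.
by case: (Req_dec (f x y z) 0) => // /Rabs_no_R0; lra.
Qed.

Lemma eq_fnorm3 (X Y Z : finType) (f g : X -> Y -> Z -> R) :
  (forall x y z, f x y z = g x y z) -> fnorm3 f = fnorm3 g.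
Proof.
move=> h; rewrite /fnorm3; congr sqrt.
by apply: eq_bigr => x _; apply: eq_bigr => y _; apply: eq_bigr => z _; rewrite h.
Qed.

Section SpectralNorm.
Variables (X Y : finType) (M : X -> Y -> R).

Definition mulv (v : Y -> R) (x : X) : R := \rsum_(y : Y) M x y * v y.

Definition specset (r : R) : Prop :=
  exists v : Y -> R, \rsum_(y : Y) v y ^ 2 <= 1 /\ r = fnorm1 (mulv v).

Lemma specset0 : specset 0.
Proof.
exists (fun _ => 0); split.
  by rewrite big1 => [|y _] /=; lra.
rewrite /fnorm1 big1 ?sqrt_0 // => x _.
by rewrite /mulv big1 => [|y _] /=; lra.
Qed.

Lemma specnorm_lub : is_lub specset (specnorm M).
Proof.
rewrite /specnorm; apply: epsilon_spec.
have hb : bound specset.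
  exists (sqrt (\rsum_(x : X) \rsum_(y : Y) M x y ^ 2)) => r [v [hv ->]].
  apply: sqrt_le_1_alt; apply: leR_sum => x _.
  apply: Rle_trans (cauchy_schwarz (M x) v) _.
  by have := sumsq_ge0 (M x); nra.
have [l hl] := completeness _ hb (ex_intro _ 0 specset0).
by exists l.
Qed.

Lemma specnorm_ge0 : 0 <= specnorm M.
Proof. by case: specnorm_lub => + _; apply; apply: specset0. Qed.

Lemma specnorm_le_ub (b : R) : (forall r, specset r -> r <= b) -> specnorm M <= b.
Proof. by case: specnorm_lub => _; apply. Qed.

(* Apply the definition to the normalised vector [v / |v|]. *)
Lemma sumsq_mulv_le (v : Y -> R) :
  \rsum_(x : X) mulv v x ^ 2 <= specnorm M ^ 2 * \rsum_(y : Y) v y ^ 2.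
Proof.
set nv := \rsum_(y : Y) v y ^ 2; set L := \rsum_(x : X) mulv v x ^ 2.
have hnv : 0 <= nv by apply: sumsq_ge0.
have hL : 0 <= L by apply: sumsq_ge0.
have [n0|npos] : nv = 0 \/ 0 < nv by lra.
  have vz := sumsq_eq0 n0.
  rewrite n0 Rmult_0_r /L big1 => [|x _]; first lra.
  by rewrite /mulv big1 /= => [|y _]; [lra | rewrite vz; lra].
have ssn := sqrt_sqrt _ hnv; have := sqrt_lt_R0 _ npos.
move: (sqrt nv) ssn => s ssn spos.
have hw : \rsum_(y : Y) (v y / s) ^ 2 <= 1.
  rewrite (_ : \rsum_(y : Y) (v y / s) ^ 2 = nv / nv); first by right; field; lra.
  by rewrite /Rdiv sumRMr; apply: eq_bigr => y _; rewrite -ssn; field; lra.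
have hLw : \rsum_(x : X) mulv (fun y => v y / s) x ^ 2 = L / nv.
  rewrite /Rdiv sumRMr; apply: eq_bigr => x _.
  rewrite /mulv (_ : \rsum_(y : Y) M x y * (v y / s) = (\rsum_(y : Y) M x y * v y) / s).
    by rewrite -ssn; field; lra.
  by rewrite /Rdiv sumRMr; apply: eq_bigr => y _; field; lra.
have h : sqrt (L / nv) <= specnorm M.
  case: specnorm_lub => hub _; apply: hub; exists (fun y => v y / s); split => //.
  by rewrite /fnorm1 hLw.
have hq : 0 <= L / nv by apply: Rmult_le_pos => //; apply/Rlt_le/Rinv_0_lt_compat.
have h2 : L / nv <= specnorm M ^ 2.
  by rewrite -(sqrt_sqrt (L / nv)) //; have := sqrt_pos (L / nv); nra.
have := Rmult_le_compat_r nv _ _ hnv h2.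
by rewrite (_ : L / nv * nv = L) //; field; lra.
Qed.

End SpectralNorm.

Section Chains.
Variables (m n : nat) (T : peps m n).
Local Notation CBt := (CB m n T).
Local Notation CPt := (CP m n T).
Local Notation colTt := (colT m n T).
Local Notation rowRngt := (rowRng m n T).
Local Notation rngt := (rng m n T).

Definition castCB (p q : nat) (e : p = q) (c : CBt p) : CBt q :=
  eq_rect p (fun k => CBt k) c q e.
Definition castCP (p q : nat) (e : p = q) (s : CPt p) : CPt q :=
  eq_rect p (fun k => CPt k) s q e.

Lemma sum_castCB (p q : nat) (e : p = q) (F : CBt q -> R) :
  \rsum_(c : CBt p) F (castCB e c) = \rsum_(c : CBt q) F c.
Proof. by case: q / e F. Qed.

Lemma sum_castCP (p q : nat) (e : p = q) (F : CPt q -> R) :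
  \rsum_(s : CPt p) F (castCP e s) = \rsum_(s : CPt q) F s.
Proof. by case: q / e F. Qed.

Lemma castCB_inj_eq (p q : nat) (e : p = q) (c c' : CBt p) :
  (castCB e c == castCB e c') = (c == c').
Proof. by case: q / e. Qed.

Lemma castCBK (p q : nat) (e1 : p = q) (e2 : q = p) (c : CBt q) :
  castCB e1 (castCB e2 c) = c.
Proof. by case: p / e2 e1 => e1; rewrite (eq_irrelevance e1 erefl). Qed.

Lemma col_cast (C : forall j, colTt j) (p q : nat) (e : p = q) s c b :
  C q (castCP e s) (castCB e c) (castCB (congr1 S e) b) = C p s c b.
Proof. by case: q / e. Qed.

Lemma sum_rowRng_cast (N N' : nat) (e : N = N') (G : forall N, rowRngt 0 N -> R) :
  \rsum_(S : rowRngt 0 N) G N S = \rsum_(S : rowRngt 0 N') G N' S.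
Proof. by case: N' / e. Qed.

Lemma eq_rng (C1 C2 : forall j, colTt j) k d :
  (forall j s a b, (k <= j)%N -> (j < d + k)%N -> C1 j s a b = C2 j s a b) ->
  forall r a b, rngt C1 k d r a b = rngt C2 k d r a b.
Proof.
elim: d => [|d IH] h r a b //=.
apply: eq_bigr => c _; rewrite IH => [|j s a' b' h1 h2]; last by apply: h; lia.
by rewrite h //; lia.
Qed.

Fixpoint catRng (k e : nat) : rowRngt 0 k -> rowRngt k e -> rowRngt 0 (e + k) :=
  match e return rowRngt 0 k -> rowRngt k e -> rowRngt 0 (e + k) with
  | 0 => fun x _ => x
  | e'.+1 => fun x y => (@catRng k e' x y.1, castCP (esym (addn0 (e' + k)%N)) y.2)
  end.

Lemma sum_catRng (k e : nat) (F : rowRngt 0 (e + k) -> R) :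
  \rsum_(S : rowRngt 0 (e + k)) F S =
  \rsum_(x : rowRngt 0 k) \rsum_(y : rowRngt k e) F (catRng x y).
Proof.
elim: e F => [|e IH] F.
  by apply: eq_bigr => x _; rewrite sumR_unit.
have -> : \rsum_(S : rowRngt 0 (e.+1 + k)) F S =
          \rsum_(S : (rowRngt 0 (e + k) * CPt (e + k + 0))%type) F (S.1, S.2).
  by apply: eq_bigr => -[].
rewrite -(sumR_pair (fun a b => F (a, b))) IH; apply: eq_bigr => x _.
have -> : \rsum_(y : rowRngt k e.+1) F (catRng (e := e.+1) x y) =
          \rsum_(y : (rowRngt k e * CPt (e + k))%type)
             F (catRng x y.1, castCP (esym (addn0 (e + k)%N)) y.2) by [].
rewrite -(sumR_pair (fun a b => F (catRng x a, castCP (esym (addn0 (e + k)%N)) b))).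
apply: eq_bigr => y _.
by rewrite -(sum_castCP (esym (addn0 (e + k)%N))).
Qed.

Lemma rng_catRng (C : forall j, colTt j) k e x y a b :
  rngt C 0 (e + k) (catRng x y) a b =
  \rsum_(c : CBt (k + 0)) rngt C 0 k x a c *
      rngt C k e y (castCB (addn0 k) c) (castCB (addn0 (e + k)%N) b).
Proof.
elim: e y b => [|e IH] y b /=.
  by under eq_bigr => c _ do rewrite castCB_inj_eq; rewrite sumR_delta.
under eq_bigr => c' _ do rewrite IH sumRMr.
rewrite exchange_big /=; apply: eq_bigr => c _.
rewrite sumRMl -(sum_castCB (addn0 (e + k)%N)); apply: eq_bigr => c' _.
have := col_cast C (esym (addn0 (e + k)%N)) y.2 (castCB (addn0 (e + k)%N) c')
   (castCB (addn0 (e.+1 + k)%N) b).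
by rewrite !castCBK Rmult_assoc => ->.
Qed.

End Chains.

Section LinearTerm.
Variables (m n : nat) (T : peps m n).
Local Notation CBt := (CB m n T).
Local Notation CPt := (CP m n T).
Local Notation colTt := (colT m n T).
Local Notation rowRngt := (rowRng m n T).
Local Notation rngt := (rng m n T).

Variables (A D : forall j, colTt j) (p : nat).
Arguments A : clear implicits.
Arguments D : clear implicits.

Definition replaceCol : forall j, colTt j := fun j => if j == p then D j else A j.

Lemma leftMat_replaceCol x s c :
  leftMat m n T replaceCol p.+1 (x, s) c =
  \rsum_(c' : CBt (p + 0)) leftMat m n T A p x c' * D (p + 0)%N s c' c.
Proof.
rewrite /leftMat /= exchange_big /=; apply: eq_bigr => c' _.
rewrite sumRMr; apply: eq_bigr => a _.
rewrite {2}/replaceCol ifT; last by apply/eqP; rewrite addn0.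
congr (_ * _).
by apply: eq_rng => j s' a' b' _ hj; rewrite /replaceCol ifN //; apply/eqP; lia.
Qed.

Lemma contract_replaceCol_catRng x y :
  \rsum_(a : CBt 0) \rsum_(b : CBt (n - p.+1 + p.+1 + 0))
     rngt replaceCol 0 (n - p.+1 + p.+1) (catRng x y) a b =
  \rsum_(c : CBt p.+1)
     rightMat m n T A p y c * leftMat m n T replaceCol p.+1 x (castCB (esym (addn0 p.+1)) c).
Proof.
under eq_bigr => a _ do under eq_bigr => b _ do rewrite rng_catRng.
rewrite -(sum_castCB (addn0 p.+1)).
under [RHS]eq_bigr => c _ do rewrite castCBK.
under eq_bigr => a _ do rewrite exchange_big.
rewrite exchange_big; apply: eq_bigr => c _.
under eq_bigr => a _ do rewrite -sumRMl.
rewrite -sumRMr Rmult_comm; congr (_ * _).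
rewrite /rightMat (sum_castCB (addn0 (n - p.+1 + p.+1)%N)).
apply: eq_bigr => b _; apply: eq_rng => j s a' b' hj _.
by rewrite /replaceCol ifN //; apply/eqP; lia.
Qed.

Lemma sumsq_leftMat_replaceCol_le :
  \rsum_(x : rowRngt 0 p.+1) \rsum_(c : CBt (p.+1 + 0)) leftMat m n T replaceCol p.+1 x c ^ 2
  <= specnorm (leftMat m n T A p) ^ 2 * fnorm3 (D p) ^ 2.
Proof.
set L := leftMat m n T A p.
have -> : fnorm3 (D p) = fnorm3 (D (p + 0)%N) by rewrite addn0.
rewrite /fnorm3 pow2_sqrt; last by do 2 (apply: sumR_ge0 => ? _); apply: sumsq_ge0.
have -> : \rsum_(x : rowRngt 0 p.+1) \rsum_(c : CBt (p.+1 + 0))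
    leftMat m n T replaceCol p.+1 x c ^ 2 =
  \rsum_(s : CPt (p + 0)) \rsum_(c : CBt (p.+1 + 0))
    \rsum_(x : rowRngt 0 p) mulv L (fun c' => D (p + 0)%N s c' c) x ^ 2.
  rewrite (eq_bigr (fun x : (rowRngt 0 p * CPt (p + 0))%type =>
    \rsum_(c : CBt (p.+1 + 0)) leftMat m n T replaceCol p.+1 (x.1, x.2) c ^ 2)); last by case.
  rewrite -(sumR_pair (fun x s => \rsum_(c : CBt (p.+1 + 0))
    leftMat m n T replaceCol p.+1 (x, s) c ^ 2)) exchange_big.
  apply: eq_bigr => s _; rewrite exchange_big; apply: eq_bigr => c _.
  by apply: eq_bigr => x _; rewrite leftMat_replaceCol.
rewrite sumRMl; apply: leR_sum => s _; rewrite [X in _ <= _ * X]exchange_big sumRMl.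
by apply: leR_sum => c _; apply: sumsq_mulv_le.
Qed.

(* One application of the spectral norm bound for each of the two blocks. *)
Lemma fnorm_contract_replaceCol_le : (p < n)%N ->
  fnorm1 (contract m n T replaceCol) <=
  specnorm (leftMat m n T A p) * fnorm3 (D p) * specnorm (rightMat m n T A p).
Proof.
move=> hp.
set L := leftMat m n T A p; set Rm := rightMat m n T A p.
have hL := specnorm_ge0 L; have hR := specnorm_ge0 Rm.
have hD := fnorm3_ge0 (D p).
rewrite /fnorm1 /contract -(sqrt_pow2 (specnorm L * fnorm3 (D p) * specnorm Rm));
  last by apply: Rmult_le_pos => //; apply: Rmult_le_pos.
apply: sqrt_le_1_alt.
have hn : n = (n - p.+1 + p.+1)%N by lia.
rewrite (sum_rowRng_cast hn (fun N S =>
  (\rsum_(a : CBt 0) \rsum_(b : CBt (N + 0)) rngt replaceCol 0 N S a b) ^ 2)).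
rewrite sum_catRng.
under eq_bigr => x _ do under eq_bigr => y _ do rewrite contract_replaceCol_catRng.
apply: (@Rle_trans _ (\rsum_(x : rowRngt 0 p.+1) specnorm Rm ^ 2 *
   \rsum_(c : CBt p.+1) leftMat m n T replaceCol p.+1 x (castCB (esym (addn0 p.+1)) c) ^ 2)).
  by apply: leR_sum => x _; apply: (sumsq_mulv_le Rm).
rewrite -sumRMl.
under eq_bigr => x _ do rewrite (sum_castCB (esym (addn0 p.+1))
  (fun c => leftMat m n T replaceCol p.+1 x c ^ 2)).
apply: Rle_trans (Rmult_le_compat_l _ _ _ (pow2_ge_0 _) sumsq_leftMat_replaceCol_le) _.
by rewrite -/L; right; ring.
Qed.

End LinearTerm.

Section FirstOrderExpansion.
Variables (m n : nat) (T : peps m n).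
Local Notation CBt := (CB m n T).
Local Notation colTt := (colT m n T).
Local Notation rowRngt := (rowRng m n T).
Local Notation rngt := (rng m n T).

Variables (A B : forall j, colTt j).
Arguments A : clear implicits.
Arguments B : clear implicits.

Definition colDiff : forall j, colTt j := fun j s a b => B j s a b - A j s a b.
Arguments colDiff : clear implicits.

Definition linPart d : rowRngt 0 d -> CBt 0 -> CBt (d + 0) -> R :=
  fun r a b => \rsum_(p : 'I_d) rngt (replaceCol A colDiff p) 0 d r a b.

Definition remainder d : rowRngt 0 d -> CBt 0 -> CBt (d + 0) -> R :=
  fun r a b => rngt B 0 d r a b - rngt A 0 d r a b - @linPart d r a b.

Lemma linPart_rec d r a b :
  @linPart d.+1 r a b =
  \rsum_(c : CBt (d + 0)) @linPart d r.1 a c * A (d + 0)%N r.2 c b +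
  \rsum_(c : CBt (d + 0)) rngt A 0 d r.1 a c * colDiff (d + 0)%N r.2 c b.
Proof.
rewrite /linPart big_ord_recr /=; congr (_ + _).
  under [RHS]eq_bigr => c _ do rewrite sumRMr.
  rewrite [RHS]exchange_big /=; apply: eq_bigr => p _; apply: eq_bigr => c _.
  by rewrite {2}/replaceCol ifN //; apply/eqP; have := ltn_ord p; lia.
apply: eq_bigr => c _; rewrite {2}/replaceCol ifT; last by apply/eqP; rewrite addn0.
congr (_ * _); apply: eq_rng => j s a' b' _ hj.
by rewrite /replaceCol ifN //; apply/eqP; lia.
Qed.

Lemma remainder_rec d r a b :
  @remainder d.+1 r a b =
  \rsum_(c : CBt (d + 0)) @remainder d r.1 a c * A (d + 0)%N r.2 c b +
  \rsum_(c : CBt (d + 0))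
     (rngt B 0 d r.1 a c - rngt A 0 d r.1 a c) * colDiff (d + 0)%N r.2 c b.
Proof.
rewrite /remainder linPart_rec /= -sumRD !sumRB -sumRB sumRB -sumRD.
by apply: eq_bigr => c _; rewrite /colDiff; ring.
Qed.

Lemma contract_sub_expansion S :
  contract m n T B S - contract m n T A S =
  \rsum_(p : 'I_n) contract m n T (replaceCol A colDiff p) S +
  \rsum_(a : CBt 0) \rsum_(b : CBt (n + 0)) @remainder n S a b.
Proof.
rewrite /contract sumRB.
have -> : \rsum_(p : 'I_n) \rsum_(a : CBt 0) \rsum_(b : CBt (n + 0))
              rngt (replaceCol A colDiff p) 0 n S a b =
          \rsum_(a : CBt 0) \rsum_(b : CBt (n + 0)) @linPart n S a b.
  by rewrite exchange_big; apply: eq_bigr => a _; rewrite exchange_big.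
rewrite -sumRD; apply: eq_bigr => a _; rewrite sumRB -sumRD; apply: eq_bigr => b _.
by rewrite /remainder; lra.
Qed.

End FirstOrderExpansion.
Arguments colDiff {m n T} A B j.
Arguments linPart {m n T} A B d _ _ _.
Arguments remainder {m n T} A B d _ _ _.

Section EntrywiseO.
Variables (Sit : Type) (valid : Sit -> Prop) (eps : Sit -> R).
Hypothesis eps01 : forall s, valid s -> 0 <= eps s <= 1.

Definition entrywiseO (k : nat) (X Y Z : finType) (F : Sit -> X -> Y -> Z -> R) :=
  exists K, 0 <= K /\ forall s, valid s -> forall x y z, Rabs (F s x y z) <= K * eps s ^ k.

Lemma eq_entrywiseO k (X Y Z : finType) (F G : Sit -> X -> Y -> Z -> R) :
  (forall s, valid s -> forall x y z, G s x y z = F s x y z) ->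
  entrywiseO k F -> entrywiseO k G.
Proof. by move=> h [K [hK hF]]; exists K; split => // s hs x y z; rewrite h //; apply: hF. Qed.

Lemma entrywiseO_const (X Y Z : finType) (F : X -> Y -> Z -> R) :
  entrywiseO 0 (fun _ => F).
Proof.
exists (fnorm3 F); split; first exact: fnorm3_ge0.
by move=> s _ x y z; rewrite Rmult_1_r; apply: entry_le_fnorm3.
Qed.

Lemma entrywiseO_weaken k (X Y Z : finType) (F : Sit -> X -> Y -> Z -> R) :
  entrywiseO k.+1 F -> entrywiseO k F.
Proof.
move=> [K [hK hF]]; exists K; split => // s hs x y z.
apply: Rle_trans (hF s hs x y z) _; apply: Rmult_le_compat_l => //=.
have [h0 h1] := eps01 hs; have := pow_le _ k h0; nra.
Qed.

Lemma entrywiseO_add k (X Y Z : finType) (F G : Sit -> X -> Y -> Z -> R) :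
  entrywiseO k F -> entrywiseO k G -> entrywiseO k (fun s x y z => F s x y z + G s x y z).
Proof.
move=> [K1 [h1 hF]] [K2 [h2 hG]]; exists (K1 + K2); split; first lra.
move=> s hs x y z; apply: Rle_trans (Rabs_triang _ _) _.
by have := hF s hs x y z; have := hG s hs x y z; lra.
Qed.

Lemma entrywiseO_contract a b (X1 X2 Y W Z : finType) (F : Sit -> X1 -> Y -> W -> R)
    (G : Sit -> X2 -> W -> Z -> R) :
  entrywiseO a F -> entrywiseO b G ->
  entrywiseO (a + b) (fun s (x : (X1 * X2)%type) y z => \rsum_(c : W) F s x.1 y c * G s x.2 c z).
Proof.
move=> [K1 [h1 hF]] [K2 [h2 hG]]; exists (INR #|W| * (K1 * K2)); split.
  by apply: Rmult_le_pos; [apply: pos_INR | apply: Rmult_le_pos].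
move=> s hs x y z; rewrite Rmult_assoc; apply: Rabs_sum_le_card => c.
rewrite Rabs_mult pow_add.
have -> : K1 * K2 * (eps s ^ a * eps s ^ b) = (K1 * eps s ^ a) * (K2 * eps s ^ b) by ring.
by apply: Rmult_le_compat; [apply: Rabs_pos | apply: Rabs_pos | apply: hF | apply: hG].
Qed.

End EntrywiseO.
Arguments entrywiseO_const {Sit valid eps X Y Z} F.

Section RemainderIsQuadratic.
Variables (m n : nat) (T : peps m n).
Local Notation colTt := (colT m n T).
Local Notation rngt := (rng m n T).

Variables (Sit : Type) (valid : Sit -> Prop) (eps : Sit -> R).
Hypothesis eps01 : forall s, valid s -> 0 <= eps s <= 1.
Variables (A : forall j, colTt j) (B : Sit -> forall j, colTt j).
Arguments A : clear implicits.
Arguments B : clear implicits.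
Hypothesis colDiffO : forall j, entrywiseO valid eps 1 (fun s => colDiff A (B s) j).

Lemma entrywiseO_col j : entrywiseO valid eps 0 (fun s => B s j).
Proof.
apply: (eq_entrywiseO (F := fun s x y z => A j x y z + colDiff A (B s) j x y z)).
  by move=> s _ x y z; rewrite /colDiff; ring.
apply: entrywiseO_add; first exact: entrywiseO_const.
by apply: (eq_entrywiseO _ (entrywiseO_weaken eps01 (colDiffO j))).
Qed.

Lemma entrywiseO_rng d : entrywiseO valid eps 0 (fun s => rngt (B s) 0 d).
Proof.
elim: d => [|d IH]; first exact: (entrywiseO_const (rngt A 0 0)).
exact: (eq_entrywiseO _ (entrywiseO_contract IH (entrywiseO_col (d + 0)%N))).
Qed.

Lemma entrywiseO_rng_sub d :
  entrywiseO valid eps 1 (fun s r a b => rngt (B s) 0 d r a b - rngt A 0 d r a b).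
Proof.
elim: d => [|d IH].
  by exists 0; split => [|s _ x y z]; rewrite /= ?Rminus_diag ?Rabs_R0; lra.
apply: (eq_entrywiseO _ (entrywiseO_add
  (entrywiseO_contract IH (entrywiseO_const (A (d + 0)%N)))
  (entrywiseO_contract (entrywiseO_rng d) (colDiffO (d + 0)%N)))).
move=> s _ r a b /=; rewrite sumRB -sumRD; apply: eq_bigr => c _; rewrite /colDiff.
by move: (rngt (B s) 0 d r.1 a c) (rngt A 0 d r.1 a c) (B s _ r.2 c b) (A _ r.2 c b) => *; ring.
Qed.

Lemma entrywiseO_remainder d : entrywiseO valid eps 2 (fun s => remainder A (B s) d).
Proof.
elim: d => [|d IH].
  exists 0; split => [|s _ x y z]; first lra.
  by rewrite /remainder /linPart big_ord0 /= Rminus_diag Rminus_0_r Rabs_R0; lra.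
apply: (eq_entrywiseO _ (entrywiseO_add
  (entrywiseO_contract IH (entrywiseO_const (A (d + 0)%N)))
  (entrywiseO_contract (entrywiseO_rng_sub d) (colDiffO (d + 0)%N)))).
by move=> s _ r a b; apply: remainder_rec.
Qed.

End RemainderIsQuadratic.

Section PEPSPerturbation.
Variables (m n : nat) (T : peps m n).
Local Notation colTt := (colT m n T).
Local Notation nodeTt := (nodeT m n T).
Local Notation column := (column m n T).

Lemma pertNode_last (delta : forall i, nodeTt i n.-1) i x1 x2 x3 x4 x5 :
  pertNode m n T delta i n.-1 x1 x2 x3 x4 x5 =
  node T i n.-1 x1 x2 x3 x4 x5 + delta i x1 x2 x3 x4 x5.
Proof.
rewrite /pertNode; case: (Nat.eq_dec n.-1 n.-1) => [e|//].
by rewrite (eq_irrelevance e erefl).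
Qed.

Lemma pertNode_notlast (delta : forall i, nodeTt i n.-1) i j x1 x2 x3 x4 x5 :
  j <> n.-1 -> pertNode m n T delta i j x1 x2 x3 x4 x5 = node T i j x1 x2 x3 x4 x5.
Proof. by move=> hj; rewrite /pertNode; case: (Nat.eq_dec n.-1 j) => [e|//]; case: hj. Qed.

Record pert := Pert {
  pert_eps1 : R; pert_eps2 : R;
  pert_Delta : forall j, colTt j; pert_delta : forall i, nodeTt i n.-1 }.
Arguments pert_Delta : clear implicits.
Arguments pert_delta : clear implicits.

Definition small_pert (s : pert) : Prop :=
  0 <= pert_eps1 s <= 1 /\ 0 <= pert_eps2 s <= 1 /\
  isPert m n T (pert_eps1 s) (pert_eps2 s) (pert_Delta s) (pert_delta s).

Definition pert_eps (s : pert) : R := Rmax (pert_eps1 s) (pert_eps2 s).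

Definition pert_chain (s : pert) : forall j, colTt j :=
  pertChain m n T (pert_Delta s) (pert_delta s).

Lemma pert_eps01 s : small_pert s -> 0 <= pert_eps s <= 1.
Proof.
rewrite /small_pert /pert_eps => -[h1 [h2 _]].
by have := Rmax_l (pert_eps1 s) (pert_eps2 s); have := Rmax_lub _ _ 1 (proj2 h1) (proj2 h2); lra.
Qed.

Lemma pert_eps_sqr_le s : small_pert s ->
  pert_eps s ^ 2 <= pert_eps1 s ^ 2 + pert_eps2 s ^ 2.
Proof.
move=> [h1 [h2 _]]; rewrite /pert_eps.
by apply: (Rmax_case _ _ (fun x => x ^ 2 <= _)); have := pow2_ge_0 (pert_eps1 s);
  have := pow2_ge_0 (pert_eps2 s); lra.
Qed.

Lemma colDiff_pert_chain_lt s j x y z : (j < n.-1)%N ->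
  colDiff column (pert_chain s) j x y z = pert_Delta s j x y z.
Proof. by move=> hj; rewrite /colDiff /pert_chain /pertChain hj /addCol; ring. Qed.

Lemma colDiff_pert_chain_last s x y z :
  colDiff column (pert_chain s) n.-1 x y z =
  colOf m n T n.-1 (fun i => addNode m n T i n.-1 (node T i n.-1) (pert_delta s i)) x y z
  - column n.-1 x y z.
Proof.
rewrite /colDiff /pert_chain /pertChain ltnn /colOf; congr (_ - _).
by apply: eq_bigr => c _; apply: eq_bigr => i _; rewrite pertNode_last.
Qed.

Lemma colDiff_pert_chain_gt s j x y z : (n.-1 < j)%N ->
  colDiff column (pert_chain s) j x y z = 0.
Proof.
move=> hj; rewrite /colDiff /pert_chain /pertChain ifN; last by rewrite -leqNgt ltnW.
rewrite /column /colOf sumRB big1 // => c _.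
rewrite Rminus_diag_eq //; apply: eq_bigr => i _.
by rewrite pertNode_notlast //; lia.
Qed.

(* Each entry of the perturbed last column is a sum over the vertical bonds of
   products of [m] perturbed node entries. *)
Lemma colDiff_pert_chain_last_O :
  entrywiseO small_pert pert_eps 1 (fun s => colDiff column (pert_chain s) n.-1).
Proof.
pose X (i : 'I_m) := fnorm5 (node T i n.-1).
have hX2 : 0 <= \big[Rmult/1]_(i <- index_enum 'I_m) (2 * X i).
  by apply: prodR_ge0 => i; apply: Rmult_le_pos; [lra | apply: sqrt_pos].
exists (INR #|VB m n T n.-1| * (INR (size (index_enum 'I_m)) *
          \big[Rmult/1]_(i <- index_enum 'I_m) (2 * X i))).
split; first by do 2 (apply: Rmult_le_pos; first exact: pos_INR).
move=> s [h1 [h2 [_ hP2]]] x y z.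
rewrite colDiff_pert_chain_last /colOf /column /colOf sumRB Rmult_assoc.
apply: Rabs_sum_le_card => c.
apply: Rle_trans (Rabs_prodD_sub_le (index_enum 'I_m)
  (x := fun i => node T i n.-1 (x i) (y i) (z i) (c (widen_ord (leqnSn m) i)) (c (lift ord0 i)))
  (y := fun i => pert_delta s i (x i) (y i) (z i) (c (widen_ord (leqnSn m) i)) (c (lift ord0 i)))
  h2 (fun i => entry_le_fnorm5 _ _ _ _ _ _)
  (fun i => Rle_trans _ _ _ (entry_le_fnorm5 _ _ _ _ _ _) (hP2 i (ltn_ord i)))) _.
rewrite /pert_eps pow_1 [X in X <= _]Rmult_assoc [X in X <= _]Rmult_comm.
apply: Rmult_le_compat_l; last exact: Rmax_r.
by apply: Rmult_le_pos => //; apply: pos_INR.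
Qed.

Lemma colDiff_pert_chain_O j :
  entrywiseO small_pert pert_eps 1 (fun s => colDiff column (pert_chain s) j).
Proof.
case: (ltnP j n.-1) => hj.
  exists (fnorm3 (column j)); split; first exact: fnorm3_ge0.
  move=> s [_ [_ [hP1 _]]] x y z; rewrite colDiff_pert_chain_lt //.
  apply: Rle_trans (entry_le_fnorm3 _ _ _ _) _; apply: Rle_trans (hP1 j hj) _.
  rewrite pow_1 Rmult_comm; apply: Rmult_le_compat_l; [exact: fnorm3_ge0 | exact: Rmax_l].
case: (eqVneq j n.-1) => [->|hne]; first exact: colDiff_pert_chain_last_O.
exists 0; split => [|s _ x y z]; first lra.
by rewrite colDiff_pert_chain_gt; [rewrite Rabs_R0 /=; lra | lia].
Qed.

End PEPSPerturbation.
Arguments pert_Delta {m n T} _ j.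
Arguments pert_delta {m n T} _ i.

Section LastColumn.
Variables (m n : nat) (T : peps m n).
Local Notation CBt := (CB m n T).
Local Notation colTt := (colT m n T).
Local Notation rowRngt := (rowRng m n T).
Local Notation rngt := (rng m n T).

Lemma CB_out_subsingleton k : (n <= k)%N -> forall c c' : CBt k, c = c'.
Proof.
move=> hk c c'; apply/ffunP => i.
have ord_eq N (x y : 'I_N) : N = 1%N -> x = y.
  by move=> hN; subst N; rewrite (ord1 x) (ord1 y).
by apply: ord_eq; rewrite /bdim hk orbT.
Qed.

(* Past the last column the bonds are trivial, so an empty block is the 1 x 1
   identity matrix. *)
Lemma specnorm_rng_empty_le1 (A : forall j, colTt j) k e : e = 0%N -> (n <= k)%N ->
  specnorm (fun (r : rowRngt k e) (a : CBt k) => \rsum_(b : CBt (e + k)) rngt A k e r a b) <= 1.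
Proof.
move=> -> hk; apply: specnorm_le_ub => r [v [hv ->]].
rewrite -sqrt_1; apply: sqrt_le_1_alt.
have hcard : INR #|CBt k| <= 1.
  have : (#|CBt k| <= 1)%N by apply/fintype_le1P => x y; apply: CB_out_subsingleton.
  by move/leP/le_INR.
rewrite (_ : 1 = INR #|rowRngt k 0| * 1); last by rewrite card_unit /=; ring.
rewrite -sumR_const; apply: leR_sum => x _.
rewrite /mulv (eq_bigr (fun a => 1 * v a)) => [|a _]; last first.
  by rewrite /= (bigD1 a) //= eqxx big1 ?Rplus_0_r // => b /negbTE; rewrite eq_sym => ->.
apply: Rle_trans (cauchy_schwarz _ _) _.
rewrite (_ : \rsum_(a : CBt k) 1 ^ 2 = INR #|CBt k|); last by rewrite sumR_const /=; ring.
by have := sumsq_ge0 v; have := pos_INR #|CBt k|; nra.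
Qed.

Lemma specnorm_rightMat_last_le1 (A : forall j, colTt j) : (0 < n)%N ->
  specnorm (rightMat m n T A n.-1) <= 1.
Proof. by move=> hn; apply: specnorm_rng_empty_le1; lia. Qed.

Lemma contract_eq0_if_last_eq0 (C : forall j, colTt j) N (S : rowRngt 0 N) :
  (0 < N)%N -> (forall x y z, C N.-1 x y z = 0) ->
  \rsum_(a : CBt 0) \rsum_(b : CBt (N + 0)) rngt C 0 N S a b = 0.
Proof.
case: N S => // N S _ hz.
have hz' : forall x y z, C (N + 0)%N x y z = 0 by rewrite addn0.
rewrite big1 // => a _; rewrite big1 // => b _.
by rewrite /= big1 // => c _; rewrite hz'; ring.
Qed.

End LastColumn.

Section ErrorBound.
Variables (m n : nat) (T : peps m n).
Local Notation CBt := (CB m n T).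
Local Notation rowRngt := (rowRng m n T).
Local Notation column := (column m n T).
Local Notation contract := (contract m n T).
Local Notation leftMat := (leftMat m n T column).
Local Notation rightMat := (rightMat m n T column).
Hypothesis n_gt0 : (0 < n)%N.
Hypothesis contract_neq0 : exists S, contract column S <> 0.

Lemma normT_gt0 : 0 < normT m n T.
Proof.
case: contract_neq0 => S hS; rewrite /normT /fnorm1; apply: sqrt_lt_R0.
apply: Rlt_le_trans (sumsq_ge_term _ S).
by have := Rsqr_pos_lt _ hS; rewrite Rsqr_pow2; lra.
Qed.

Lemma fnorm3_column_last_gt0 : 0 < fnorm3 (column n.-1).
Proof.
case: (Rlt_or_le 0 (fnorm3 (column n.-1))) => // /fnorm3_eq0 hz.
by case: contract_neq0 => S; rewrite /contract contract_eq0_if_last_eq0.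
Qed.

Local Notation linear_term s p :=
  (fnorm1 (contract (replaceCol column (colDiff column (pert_chain s)) p))).

Lemma fnorm_pert_err_le : exists Cq, 0 <= Cq /\ forall s, small_pert s ->
  fnorm1 (fun S => contract (pert_chain s) S - contract column S) <=
  \rsum_(p : 'I_n) linear_term s p + Cq * pert_eps s ^ 2.
Proof.
have [K [hK hrem]] := entrywiseO_remainder (@pert_eps01 _ _ T) (@colDiff_pert_chain_O _ _ T) n.
set c := INR #|CBt 0| * INR #|CBt (n + 0)|.
have hc : 0 <= c by apply: Rmult_le_pos; apply: pos_INR.
exists (sqrt (INR #|rowRngt 0 n|) * (c * K)); split.
  by apply: Rmult_le_pos; [apply: sqrt_pos | apply: Rmult_le_pos].
move=> s hs; rewrite /fnorm1.
under eq_bigr => S _ do rewrite contract_sub_expansion.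
apply: Rle_trans (fnorm1_add_le _ _) _; apply: Rplus_le_compat.
  exact: fnorm1_sum_le.
rewrite Rmult_assoc; apply: fnorm1_le_card.
  have := pert_eps01 hs; have := pow2_ge_0 (pert_eps s).
  by move=> h2 h; apply: Rmult_le_pos => //; apply: Rmult_le_pos.
by move=> S; rewrite /c !Rmult_assoc; do 2 apply: Rabs_sum_le_card => ?; apply: hrem.
Qed.

Lemma linear_term_lt_le s (p : 'I_n.-1) : small_pert s ->
  linear_term s p <=
  pert_eps1 s * (specnorm (leftMat p) * fnorm3 (column p) * specnorm (rightMat p)).
Proof.
move=> [_ [_ [hDelta _]]]; have hp : (p < n.-1)%N := ltn_ord p.
apply: Rle_trans (fnorm_contract_replaceCol_le _ _ _) _; first lia.
rewrite (eq_fnorm3 (g := pert_Delta s p)) => [|x y z]; last exact: colDiff_pert_chain_lt.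
have := hDelta p hp; have := specnorm_ge0 (leftMat p); have := specnorm_ge0 (rightMat p).
set a := specnorm _; set b := specnorm _ => ha hb h.
have := Rmult_le_compat_r _ _ _ ha (Rmult_le_compat_l _ _ _ hb h); lra.
Qed.

Lemma linear_term_last_le s : small_pert s ->
  linear_term s n.-1 <=
  relErrCol m n T (pert_delta s) * specnorm (leftMat n.-1) * fnorm3 (column n.-1).
Proof.
move=> _; have hc := fnorm3_column_last_gt0.
apply: Rle_trans (fnorm_contract_replaceCol_le _ _ _) _; first lia.
have -> : fnorm3 (colDiff column (pert_chain s) n.-1) =
          relErrCol m n T (pert_delta s) * fnorm3 (column n.-1).
  rewrite /relErrCol (_ : forall u v, 0 < v -> u / v * v = u) //; last by move=> *; field; lra.
  by apply: eq_fnorm3 => x y z; apply: colDiff_pert_chain_last.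
have hre : 0 <= relErrCol m n T (pert_delta s).
  by apply: Rmult_le_pos; [apply: sqrt_pos | apply/Rlt_le/Rinv_0_lt_compat].
have := specnorm_ge0 (leftMat n.-1); have := specnorm_rightMat_last_le1 column n_gt0.
set a := specnorm (leftMat n.-1); set b := specnorm _ => hb ha.
have hx : 0 <= a * (relErrCol m n T (pert_delta s) * fnorm3 (column n.-1)).
  by apply: Rmult_le_pos => //; apply: Rmult_le_pos => //; lra.
have := Rmult_le_compat_l _ _ _ hx hb; rewrite Rmult_1_r => h.
by apply: Rle_trans h _; right; ring.
Qed.

Lemma fnorm_pert_err_first_order : exists Cq, 0 <= Cq /\ forall s, small_pert s ->
  fnorm1 (fun S => contract (pert_chain s) S - contract column S) <=
  pert_eps1 s * (\rsum_(i : 'I_n.-1)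
      specnorm (leftMat i) * fnorm3 (column i) * specnorm (rightMat i))
  + relErrCol m n T (pert_delta s) * specnorm (leftMat n.-1) * fnorm3 (column n.-1)
  + Cq * pert_eps s ^ 2.
Proof.
have [Cq [hCq herr]] := fnorm_pert_err_le.
exists Cq; split => // s hs; apply: Rle_trans (herr s hs) _.
rewrite (sumR_ord_last (fun p => linear_term s p) n_gt0) sumRMl.
have := linear_term_last_le hs.
have : \rsum_(p : 'I_n.-1) linear_term s p <= \rsum_(i : 'I_n.-1) pert_eps1 s *
    (specnorm (leftMat i) * fnorm3 (column i) * specnorm (rightMat i)).
  by apply: leR_sum => p _; apply: linear_term_lt_le.
by move=> h1 h2; apply/Rplus_le_compat_r/Rplus_le_compat.
Qed.

End ErrorBound.

Theorem mainTheorem14 (m n : nat) (T : peps m n) :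
  (0 < m)%N -> (0 < n)%N ->
  (exists S, contract m n T (column m n T) S <> 0) ->
  exists C eps0 : R, 0 < eps0 /\
    forall (eps1 eps2 : R) (Delta : forall j : nat, colT m n T j)
           (delta : forall i : nat, nodeT m n T i n.-1),
      0 <= eps1 <= eps0 -> 0 <= eps2 <= eps0 ->
      isPert m n T eps1 eps2 Delta delta ->
      relErr m n T Delta delta <=
        eps1 * (\rsum_(i : 'I_n.-1)
                 (specnorm (leftMat m n T (column m n T) i)
                  * fnorm3 (column m n T i)
                  * specnorm (rightMat m n T (column m n T) i) / normT m n T))
        + relErrCol m n T delta
            * specnorm (leftMat m n T (column m n T) n.-1)
            * fnorm3 (column m n T n.-1) / normT m n T
        + C * (eps1 ^ 2 + eps2 ^ 2).
Proof.
move=> _ hn hT; have hN := normT_gt0 hT.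
have [Cq [hCq herr]] := fnorm_pert_err_first_order hn hT.
exists (Cq / normT m n T), 1; split => [|e1 e2 Delta delta he1 he2 hP]; first lra.
have hs : small_pert (Pert e1 e2 Delta delta) by [].
have := herr _ hs; have := Rmult_le_compat_l _ _ _ hCq (pert_eps_sqr_le hs).
rewrite /relErr /Rdiv -sumRMr /=.
set E := fnorm1 _; set S := \rsum_(i : 'I_n.-1) _; set Q := e1 ^ 2 + e2 ^ 2 => hQ hE.
have hNinv := Rinv_0_lt_compat _ hN.
apply: Rle_trans (Rmult_le_compat_r _ _ _ (Rlt_le _ _ hNinv) (Rle_trans _ _ _ hE _)) _.
  by apply: Rplus_le_compat_l hQ.
by right; ring.
Qed.
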